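(* Under the setting described in the context, the sequence $\{u_n\}_{n\in\mathbb{N}}$ is bounded in $L^\infty((0,T)\times(0,L))$ for every $T>0$.
   Context: $L>0$. $\Phi\in C(\mathbb{R})\cap C^1(\mathbb{R}\setminus\{\pm1\})$ is constant on $(-\infty,-1]$ and on $[1,\infty)$, convex on $[-1,1]$, decreasing on $[-1,0]$, increasing on $[0,1]$; $u_0\in H^1(0,L)$, $u_1\in L^2(0,L)$. Sequences $\{u_{0,n}\},\{u_{1,n}\}\subset C^\infty([0,L])$, $\{\Phi_n\}\subset C^\infty(\mathbb{R})$ satisfy: $u_{0,n}\to u_0$ in $H^1(0,L)$, $u_{1,n}\to u_1$ in $L^2(0,L)$, $\Phi_n\to\Phi$ uniformly on $\mathbb{R}$; $\Phi_n'\to\Phi'$ pointwise on $\mathbb{R}$ and uniformly on $\mathbb{R}\setminus((-1-\varepsilon,-1+\varepsilon)\cup(1-\varepsilon,1+\varepsilon))$ for every $\varepsilon>0$; $\Phi_n'(u)=0$ whenever $|u|\ge1+\varepsilon$ (any $\varepsilon>0$, all $n$); there is $C>0$ independent of $n$ with $\|u_{0,n}\|_{H^1}\le C$, $\|u_{1,n}\|_{L^2}\le C$, $0\le\Phi_n,\Phi_n'\le C$; and $u_{0,n}'(0)=u_{0,n}'(L)=u_{1,n}(0)=u_{1,n}(L)=0$. For each $n$, $u_n$ is the (global) classical solution of $\partial_{tt}^2 u_n=\partial_{xx}^2 u_n-\Phi_n'(u_n)$ for $t>0$, $0<x<L$, with $\partial_x u_n(t,0)=\partial_x u_n(t,L)=0$,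 $u_n(0,\cdot)=u_{0,n}$, $\partial_t u_n(0,\cdot)=u_{1,n}$. *)

From HB Require Import structures.
From mathcomp Require Import all_boot all_order all_algebra.
From mathcomp Require Import all_classical all_reals all_analysis.
Set Implicit Arguments. Unset Strict Implicit. Unset Printing Implicit Defensive.
Import Order.TTheory GRing.Theory Num.Theory.
Import numFieldNormedType.Exports.
Local Open Scope classical_set_scope.
Local Open Scope ring_scope.

Section Defs.
Variable R : realType.

Definition I0L (L : R) : set R := `]0, L[.

Definition sqint (L : R) (f : R -> R) : \bar R :=
  (\int[lebesgue_measure]_(x in I0L L) ((f x) ^+ 2)%:E)%E.

Definition L2 (L : R) (f : R -> R) : Prop :=
  measurable_fun (I0L L) f /\ (sqint L f < +oo)%E.

Definition L2conv (L : R) (fs : nat -> R -> R) (f : R -> R) : Prop :=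
  forall e : R, 0 < e -> exists N : nat, forall n : nat, (N <= n)%N ->
    (sqint L (fun x => (fs n x - f x)%R) < e%:E)%E.

Definition smooth (f : R -> R) : Prop :=
  forall (k : nat) (x : R), derivable (derive1n k f) x 1.

Definition test_fun (L : R) (phi : R -> R) : Prop :=
  smooth phi /\ exists a b : R, 0 < a /\ b < L /\
    forall x, (x < a \/ b < x) -> phi x = 0.

Definition weak_deriv (L : R) (u g : R -> R) : Prop :=
  forall phi, test_fun L phi ->
    Rintegral lebesgue_measure (I0L L) (fun x => u x * (derive1 phi) x)
    = - Rintegral lebesgue_measure (I0L L) (fun x => g x * phi x).

Definition H1 (L : R) (u : R -> R) : Prop :=
  L2 L u /\ exists g, L2 L g /\ weak_deriv L u g.

Definition H1conv (L : R) (us : nat -> R -> R) (u : R -> R) : Prop :=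
  exists g, L2 L g /\ weak_deriv L u g /\
    L2conv L us u /\ L2conv L (fun n => (derive1 (us n))) g.

(* C^oo([a,b]): D k is the k-th derivative, continuous up to the boundary,
   with D k' = D (k+1) on the open interval. *)
Definition cinf_cc (a b : R) (f : R -> R) (D : nat -> R -> R) : Prop :=
  (forall x : R, a <= x <= b -> D 0%N x = f x) /\
  (forall k, {within `[a, b], continuous (D k)}) /\
  (forall k (x : R), a < x < b -> is_derive x 1 (D k) (D k.+1 x)).

Definition H1norm_le (L : R) (f : R -> R) (C : R) : Prop :=
  (sqint L f + sqint L ((derive1 f)) <= (C ^+ 2)%:E)%E.

Definition L2norm_le (L : R) (f : R -> R) (C : R) : Prop :=
  (sqint L f <= (C ^+ 2)%:E)%E.

Definition Qcl (L : R) : set (R * R) := [set p | 0 <= p.1 /\ 0 <= p.2 <= L].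

Definition cont_Q (L : R) (F : R -> R -> R) : Prop :=
  {within Qcl L, continuous (fun p : R * R => F p.1 p.2)}.

Definition classical_solution (L : R) (dPhi u0 u1 : R -> R)
  (u : R -> R -> R) : Prop :=
  exists ut ux utt uxx utx uxt : R -> R -> R,
    (cont_Q L u /\ cont_Q L ut /\ cont_Q L ux /\ cont_Q L utt /\
        cont_Q L uxx /\ cont_Q L utx /\ cont_Q L uxt) /\
    (forall t x : R, 0 < t -> 0 < x < L ->
      is_derive t 1 (fun s => u s x) (ut t x) /\
      is_derive x 1 (u t) (ux t x) /\
      is_derive t 1 (fun s => ut s x) (utt t x) /\
      is_derive x 1 (ux t) (uxx t x) /\
      is_derive x 1 (ut t) (utx t x) /\
      is_derive t 1 (fun s => ux s x) (uxt t x) /\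
      utt t x = uxx t x - dPhi (u t x)) /\
    (forall t : R, 0 < t -> ux t 0 = 0 /\ ux t L = 0) /\
    (forall x : R, 0 <= x <= L -> u 0 x = u0 x /\ ut 0 x = u1 x).

End Defs.

(* The bound is the energy estimate, uniform in n because only the bounds
   ||u0n||_H1 <= C, ||u1n||_L2 <= C and 0 <= Phi_n <= C enter it.  The energy
   E(t) = \int_0^L (ut^2 + ux^2 + 2 Phi_n(u)) is conserved, the Neumann condition
   killing the boundary flux, so E(t) = E(0) <= 2 C^2 + 2 C L.  Since |a| <= 1 + a^2,
   both \int |ut(t)| and \int |ux(t)| are at most L + E(0): the first bound makes the
   mean of u(t) grow at most linearly in t, the second bounds the oscillation of u(t)
   in x, and together they bound |u(t, x)|. *)

From HB Require Import structures.
From mathcomp Require Import all_boot all_order all_algebra.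
From mathcomp Require Import all_classical all_reals all_analysis.
From mathcomp Require Import ring lra.
Import Order.TTheory GRing.Theory Num.Theory.
Import numFieldNormedType.Exports.
Local Open Scope classical_set_scope.
Local Open Scope ring_scope.

Set Implicit Arguments. Unset Strict Implicit. Unset Printing Implicit Defensive.

Section real_calculus.
Variable R : realType.
Implicit Types (a b x : R) (f df : R -> R).

Lemma MVT_cc f df a b : a < b ->
  (forall x, a <= x <= b -> is_derive x 1 f (df x)) ->
  exists2 c, a < c < b & f b - f a = df c * (b - a).
Proof.
move=> ab fdf.
have [||c] := @MVT R f df a b ab.
- by move=> x; rewrite in_itv /= => /andP[ax xb]; apply: fdf; rewrite (ltW ax) (ltW xb).
- apply: derivable_within_continuous => x; rewrite in_itv /= => xab.
  by have [] := fdf x xab.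
- by rewrite in_itv /=; exists c.
Qed.

Lemma MVT_between f df a b :
  (forall x, `|x - a| <= `|b - a| -> is_derive x 1 f (df x)) ->
  exists2 c, `|c - a| <= `|b - a| & f b - f a = df c * (b - a).
Proof.
move=> fdf; have [ab|ba|<-] := ltgtP a b.
- have [|c /andP[ac cb] E] := @MVT_cc f df a b ab.
    by move=> x /andP[ax xb]; apply: fdf; rewrite !ger0_norm; lra.
  by exists c => //; rewrite !ger0_norm; lra.
- have [|c /andP[bc ca] E] := @MVT_cc f df b a ba.
    by move=> x /andP[bx xa]; apply: fdf; rewrite !ler0_norm; lra.
  by exists c; [rewrite !ler0_norm; lra | rewrite -opprB E; ring].
- by exists a; rewrite !subrr ?mulr0.
Qed.

Lemma is_derive_increment f x l :
  (forall e, 0 < e -> exists2 d, 0 < d &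
     forall h, h != 0 -> `|h| < d -> `|f (h + x) - f x - h * l| <= e * `|h|) ->
  is_derive x 1 f l.
Proof.
move=> incr.
have dq : (fun h : R => h^-1 *: (f (h *: 1 + x) - f x)) @ 0^' --> l.
  apply/cvgrPdist_le => e e0; have [d d0 fd] := incr e e0.
  apply/nbhs_ballP; exists d => //= h; rewrite /ball /= sub0r normrN => hd h0.
  rewrite -[h%:A]/(h * 1) mulr1 -[h^-1 *: _]/(h^-1 * _) distrC.
  have -> : h^-1 * (f (h + x) - f x) - l = (f (h + x) - f x - h * l) / h.
    by field.
  by rewrite normf_div ler_pdivrMr ?normr_gt0 // fd.
by apply: DeriveDef; [apply/cvg_ex; exists l | exact: cvg_lim dq].
Qed.

Lemma Rintegral_oo_derive f df a b : a < b ->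
  {within `[a, b], continuous f} -> {within `[a, b], continuous df} ->
  (forall x, a < x < b -> is_derive x 1 f (df x)) ->
  \int[lebesgue_measure]_(x in `]a, b[) df x = f b - f a.
Proof.
move=> ab cf cdf fdf.
have f_oo : derivable_oo_LRcontinuous f a b.
  have [_ fa fb] := (continuous_within_itvP _ ab).1 cf.
  by split => // x; rewrite in_itv /= => /fdf[].
have f'E : {in `]a, b[, f^`()%classic =1 df}.
  by move=> x; rewrite in_itv /= => /fdf fx; rewrite derive1E derive_val.
have idf : lebesgue_measure.-integrable `[a, b] (EFin \o df).
  by apply: continuous_compact_integrable => //; exact: segment_compact.
rewrite /Rintegral -(@integral_itv_bndoo _ a b (EFin \o df) true false).
  by rewrite (continuous_FTC2 ab cdf f_oo f'E) -EFinB.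
apply: (measurable_int lebesgue_measure).
by apply: integrableS idf => //; exact: subset_itv_oo_cc.
Qed.

Lemma continuous_integrable_itv_oo f a b a' b' : a' <= a -> b <= b' ->
  {within `[a', b'], continuous f} ->
  lebesgue_measure.-integrable `]a, b[ (EFin \o f).
Proof.
move=> a'a bb' cf.
have icc : lebesgue_measure.-integrable `[a, b] (EFin \o f).
  apply: continuous_compact_integrable; first exact: segment_compact.
  apply: continuous_subspaceW cf => z /=; rewrite !in_itv /= => /andP[az zb].
  by rewrite (le_trans a'a az) (le_trans zb bb').
by apply: integrableS icc => //; exact: subset_itv_oo_cc.
Qed.

Lemma Rintegral_itv_oo_cst a b (c : R) : a <= b ->
  \int[lebesgue_measure]_(x in `]a, b[) c = c * (b - a).
Proof.
move=> ab; rewrite Rintegral_cst //.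
have := @lebesgue_measure_itv R `]a, b[; rewrite /= lte_fin => ->.
by move: ab; rewrite le_eqVlt => /predU1P[->|->]; rewrite ?ltxx ?subrr.
Qed.

Lemma normr_le1Dsqr a : `|a| <= 1 + a ^+ 2.
Proof. rewrite -real_normK ?num_real //; have := normr_ge0 a; nra. Qed.

Lemma derivable_continuous f : (forall x, derivable f x 1) -> continuous f.
Proof. by move=> df x; apply/differentiable_continuous/derivable1_diffP. Qed.

Lemma dist_max0_le a b : `|Num.max a 0 - Num.max b 0| <= `|a - b|.
Proof.
have [a0|a0] := leP a 0; have [b0|b0] := leP b 0; rewrite ?subrr ?normr0 //.
- by rewrite sub0r normrN (gtr0_norm b0) distrC ger0_norm; lra.
- by rewrite subr0 (gtr0_norm a0) ger0_norm; lra.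
Qed.

Lemma le_Rintegral_subset (A B : set R) f :
  measurable A -> measurable B -> A `<=` B ->
  lebesgue_measure.-integrable B (EFin \o f) -> (forall x, B x -> 0 <= f x) ->
  \int[lebesgue_measure]_(x in A) f x <= \int[lebesgue_measure]_(x in B) f x.
Proof.
move=> mA mB AB iB f0.
have iA : lebesgue_measure.-integrable A (EFin \o f) by exact: integrableS iB.
rewrite fine_le ?integrable_fin_num //.
by apply: ge0_subset_integral => //; case/integrableP: iB.
Qed.

End real_calculus.

Section cont_Q.
Variables (R : realType) (L : R).
Implicit Types (F G : R -> R -> R) (t x : R).

Lemma I0LE x : I0L L x = (0 < x < L).
Proof. by rewrite /I0L /= in_itv. Qed.

Lemma Qcl_oo t x : 0 <= t -> 0 < x < L -> Qcl L (t, x).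
Proof. by move=> t0 /andP[x0 xL]; split => //; apply/andP; split; exact: ltW. Qed.

Lemma cont_Q_dist_lt F t x : cont_Q L F -> Qcl L (t, x) ->
  forall e, 0 < e -> exists2 d, 0 < d & forall s y, Qcl L (s, y) ->
    `|s - t| < d -> `|y - x| < d -> `|F s y - F t x| < e.
Proof.
move=> cF Qtx e e0.
have := (subspace_continuousP _ _).1 cF (t, x) Qtx.
move/cvgrPdist_lt => /(_ e e0) /nbhs_ballP [d /= d0 Fd].
exists d => // s y Qsy st yx; rewrite distrC; apply: (Fd (s, y)) => //.
by split; rewrite /ball /= distrC.
Qed.

Lemma cont_Q_bounded F T : cont_Q L F ->
  exists B, forall t x, 0 <= t <= T -> 0 <= x <= L -> `|F t x| <= B.
Proof.
move=> cF; pose K : set (R * R) := `[0, T] `*` `[0, L].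
have cK : compact K by apply: compact_setX; exact: segment_compact.
have cFK : {within K, continuous (fun p : R * R => F p.1 p.2)}.
  apply: continuous_subspaceW cF => -[s y].
  rewrite /K /Qcl /= !in_itv /= => -[/andP[s0 _] yL].
  by split.
have [M [_ FM]] := compact_bounded (continuous_compact cFK cK).
exists (M + 1) => t x tT xL; apply: (FM (M + 1)); first by rewrite ltrDl.
by exists (t, x) => //; rewrite /K /= !in_itv /=.
Qed.

Lemma cont_QD F G : cont_Q L F -> cont_Q L G -> cont_Q L (fun t x => F t x + G t x).
Proof. by move=> cF cG p; apply: continuousD; [exact: cF | exact: cG]. Qed.

Lemma cont_QB F G : cont_Q L F -> cont_Q L G -> cont_Q L (fun t x => F t x - G t x).
Proof. by move=> cF cG p; apply: continuousB; [exact: cF | exact: cG]. Qed.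

Lemma cont_QM F G : cont_Q L F -> cont_Q L G -> cont_Q L (fun t x => F t x * G t x).
Proof. by move=> cF cG p; apply: continuousM; [exact: cF | exact: cG]. Qed.

Lemma cont_Q_comp (g : R -> R) F : continuous g -> cont_Q L F ->
  cont_Q L (fun t x => g (F t x)).
Proof.
move=> cg cF p.
exact: (@continuous_comp _ _ _ (fun p : subspace (Qcl L) => F p.1 p.2) g p (cF p) (cg _)).
Qed.

Lemma cont_Q_cst (c : R) : cont_Q L (fun _ _ => c).
Proof. by move=> p; exact: cst_continuous. Qed.

Lemma cont_Q_slice F s : cont_Q L F -> 0 <= s -> {within `[0, L], continuous (F s)}.
Proof.
move=> cF s0; apply/subspace_continuousP => y /= yL; apply/cvgrPdist_lt => e e0.
have Qsy : Qcl L (s, y) by move: yL; rewrite in_itv.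
have [d d0 Fd] := cont_Q_dist_lt cF Qsy e0.
apply/nbhs_ballP; exists d => //= z; rewrite /ball /= => yz zL.
by rewrite distrC; apply: Fd; rewrite ?subrr ?normr0 1?distrC //; move: zL; rewrite /= in_itv.
Qed.

Lemma cont_Q_increment_le0 F y z c r d : cont_Q L F -> 0 < y < L -> 0 < z < L ->
  0 < d -> (forall s, 0 < s < d -> `|F s y - F s z - c| <= r) ->
  `|F 0 y - F 0 z - c| <= r.
Proof.
move=> cF yL zL d0 Fr; apply/ler_addgt0Pr => e e0.
have e20 : 0 < e / 2 by rewrite divr_gt0.
have [d1 d10 Fy] := cont_Q_dist_lt cF (Qcl_oo (lexx 0) yL) e20.
have [d2 d20 Fz] := cont_Q_dist_lt cF (Qcl_oo (lexx 0) zL) e20.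
pose m := Num.min d (Num.min d1 d2).
have [md md1 md2 m0] : [/\ m <= d, m <= d1, m <= d2 & 0 < m].
  by rewrite !ge_min !lexx ?orbT !lt_min d0 d10 d20.
pose s := m / 2.
have s0 : 0 < s by rewrite divr_gt0.
have B1 : `|F 0 y - F s y| < e / 2.
  rewrite distrC; apply: Fy; first exact: Qcl_oo (ltW s0) yL.
  - by rewrite subr0 gtr0_norm // /s; lra.
  - by rewrite subrr normr0.
have B2 : `|F s z - F 0 z| < e / 2.
  apply: Fz; first exact: Qcl_oo (ltW s0) zL.
  - by rewrite subr0 gtr0_norm // /s; lra.
  - by rewrite subrr normr0.
have B3 := Fr s ltac:(rewrite s0 /s; lra).
have -> : F 0 y - F 0 z - c = (F 0 y - F s y) + (F s z - F 0 z) + (F s y - F s z - c).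
  by ring.
apply: le_trans (ler_normD _ _) _; apply: le_trans (lerD (ler_normD _ _) (lexx _)) _.
lra.
Qed.

Lemma cont_Q_integrable F s : cont_Q L F -> 0 <= s ->
  lebesgue_measure.-integrable (I0L L) (EFin \o F s).
Proof. by move=> cF s0; apply: continuous_integrable_itv_oo (cont_Q_slice cF s0). Qed.

Lemma sqint_Rintegral (f g : R -> R) : {within `[0, L], continuous g} ->
  (forall x, 0 < x < L -> f x = g x) ->
  sqint L f = (\int[lebesgue_measure]_(x in I0L L) g x ^+ 2)%:E.
Proof.
move=> cg fg.
have ig : lebesgue_measure.-integrable (I0L L) (EFin \o (fun x => g x ^+ 2)).
  apply: continuous_integrable_itv_oo (lexx 0) (lexx L) _.
  by move=> x; apply: continuousM; exact: cg.
rewrite /sqint /Rintegral fineK; last by apply: integrable_fin_num => //; exact: measurable_itv.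
by apply: eq_integral => x; rewrite inE /= I0LE => /fg ->.
Qed.

End cont_Q.

Section space_integral.
Variables (R : realType) (L : R).
Implicit Types (F Ft : R -> R -> R) (t : R).

Definition xint F t := \int[lebesgue_measure]_(x in I0L L) F t x.

Lemma xint_is_derive F Ft t : cont_Q L F -> cont_Q L Ft ->
  (forall s x : R, 0 < s -> 0 < x < L -> is_derive s 1 (F^~ x) (Ft s x)) ->
  0 < t -> is_derive t 1 (xint F) (xint Ft t).
Proof.
move=> cF cFt dF t0.
have [M FtM] := cont_Q_bounded (t + 1) cFt.
have mI : measurable (I0L L) by exact: measurable_itv.
have near_t s : `]t / 2, t + 1[%classic s -> 0 < s /\ s <= t + 1.
  by rewrite /= in_itv /= => /andP[s1 s2]; split; lra.
have It : `]t / 2, t + 1[%classic t by rewrite /= in_itv /=; apply/andP; split; lra.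
have iF s : `]t / 2, t + 1[%classic s -> lebesgue_measure.-integrable (I0L L) (EFin \o F s).
  by case/near_t => s0 _; exact: cont_Q_integrable cF (ltW s0).
have dF' s y : `]t / 2, t + 1[%classic s -> I0L L y -> partial1of2 F s y = Ft s y.
  case/near_t => s0 _; rewrite I0LE => yL.
  by have := dF s y s0 yL; rewrite /partial1of2 derive1E => ?; rewrite derive_val.
have derF s y : `]t / 2, t + 1[%classic s -> I0L L y -> derivable (F^~ y) s 1.
  by case/near_t => s0 _; rewrite I0LE => /(dF s y s0)[].
pose G := fun _ : R => Num.max M 0.
have G0 y : 0 <= G y by rewrite le_max lexx orbT.
have iG : lebesgue_measure.-integrable (I0L L) (EFin \o G).
  exact: (cont_Q_integrable (@cont_Q_cst _ L _) (lexx (0 : R))).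
have FtG s y : `]t / 2, t + 1[%classic s -> I0L L y -> `|partial1of2 F s y| <= G y.
  move=> Is Iy; rewrite dF' //; have [s0 st] := near_t s Is.
  move: Iy; rewrite I0LE => /andP[y0 yL].
  by apply: le_trans (FtM _ _ _ _) _; rewrite ?le_max ?lexx ?(ltW s0) ?(ltW y0) ?(ltW yL).
apply: DeriveDef.
  exact: (@derivable_under_integral R _ _ lebesgue_measure F (I0L L) mI t _ _ It
    iF derF G G0 iG FtG).
rewrite -derive1E /xint (@differentiation_under_integral R _ _ lebesgue_measure F (I0L L)
  mI t _ _ It iF derF G G0 iG FtG).
by apply: eq_Rintegral => y; rewrite inE => Iy; rewrite dF'.
Qed.

Lemma xint_continuous F T : 0 <= T -> cont_Q L F -> {within `[0, T], continuous (xint F)}.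
Proof.
move=> T0 cF; have [M FM] := cont_Q_bounded (T + 1) cF.
(* Extending F to negative times puts [0, T] inside the open interval ]-1, T + 1[
   on which continuity under the integral is available. *)
pose Fp s := F (Num.max s 0).
have mI : measurable (I0L L) by exact: measurable_itv.
have Qp s y : 0 < y < L -> Qcl L (Num.max s 0, y).
  by apply: Qcl_oo; rewrite le_max lexx orbT.
have iFp s : `]-1, T + 1[%classic s -> lebesgue_measure.-integrable (I0L L) (EFin \o Fp s).
  by move=> _; apply: cont_Q_integrable cF _; rewrite le_max lexx orbT.
have cFp : {ae lebesgue_measure, forall y, I0L L y ->
    {in `]-1, T + 1[%classic, continuous (Fp ^~ y)}}.
  apply: aeW => y; rewrite I0LE => yL s _; apply/cvgrPdist_lt => e e0.
  have [d d0 Fd] := cont_Q_dist_lt cF (Qp s y yL) e0.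
  apply/nbhs_ballP; exists d => //= z; rewrite /ball /= => sz.
  rewrite distrC; apply: Fd; [exact: Qp | | by rewrite subrr normr0].
  by apply: le_lt_trans (dist_max0_le _ _) _; rewrite distrC.
pose G := fun _ : R => Num.max M 0.
have iG : lebesgue_measure.-integrable (I0L L) (EFin \o G).
  exact: (cont_Q_integrable (@cont_Q_cst _ L _) (lexx (0 : R))).
have FpG s : `]-1, T + 1[%classic s ->
    {ae lebesgue_measure, forall y, I0L L y -> `|Fp s y| <= G y}.
  rewrite /= in_itv /= => /andP[s1 s2]; apply: aeW => y; rewrite I0LE => /andP[y0 yL].
  apply: le_trans (FM _ _ _ _) _; rewrite ?le_max ?lexx ?orbT ?(ltW y0) ?(ltW yL) //=.
  by rewrite ge_max (ltW s2); lra.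
have cxint := @continuity_under_integral R _ _ lebesgue_measure Fp (I0L L) mI (-1) (T + 1)
  iFp cFp G iG FpG.
apply: (@subspace_eq_continuous _ _ _ (fun s => \int[lebesgue_measure]_(y in I0L L) Fp s y)).
  by move=> s; rewrite inE /= in_itv /= => /andP[s0 _]; rewrite /xint /Fp max_l.
apply: continuous_in_subspaceT => s; rewrite inE /= in_itv /= => /andP[s0 sT].
by apply: cxint; rewrite inE /= in_itv /=; apply/andP; split; lra.
Qed.

End space_integral.

Section mixed_partials.
Variables (R : realType) (u ut ux utx uxt : R -> R -> R).

(* Both sides, multiplied by h^2, are the second difference
   u (t + h) (x + h) - u (t + h) x - u t (x + h) + u t x,
   evaluated by the mean value theorem in the two possible orders. *)
Lemma mixed_partials_square (t x h : R) : 0 < h ->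
  let Q (s y : R) := t <= s <= t + h /\ x <= y <= x + h in
  (forall s y, Q s y -> is_derive s 1 (u^~ y) (ut s y)) ->
  (forall s y, Q s y -> is_derive y 1 (u s) (ux s y)) ->
  (forall s y, Q s y -> is_derive y 1 (ut s) (utx s y)) ->
  (forall s y, Q s y -> is_derive s 1 (ux^~ y) (uxt s y)) ->
  exists s y s' y', [/\ Q s y, Q s' y' & utx s y = uxt s' y'].
Proof.
move=> h0 Q dut dux dutx duxt.
have th : t < t + h by rewrite ltrDl.
have xh : x < x + h by rewrite ltrDl.
have Qt y : x <= y <= x + h -> Q t y by split; rewrite // lexx (ltW th).
have Qth y : x <= y <= x + h -> Q (t + h) y by split; rewrite // lexx (ltW th).
have Qx s : t <= s <= t + h -> Q s x by split; rewrite // lexx (ltW xh).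
have Qxh s : t <= s <= t + h -> Q s (x + h) by split; rewrite // lexx (ltW xh).
have [s /andP[ts sth] E1] := @MVT_cc _ (fun s => u s (x + h) - u s x)
  (fun s => ut s (x + h) - ut s x) _ _ th
  (fun s Is => is_deriveB (dut _ _ (Qxh s Is)) (dut _ _ (Qx s Is))).
have Is : t <= s <= t + h by rewrite (ltW ts) (ltW sth).
have [y /andP[xy yxh] E2] := @MVT_cc _ (ut s) (utx s) _ _ xh
  (fun y Iy => dutx _ _ (conj Is Iy)).
have [y' /andP[xy' y'xh] E3] := @MVT_cc _ (fun y => u (t + h) y - u t y)
  (fun y => ux (t + h) y - ux t y) _ _ xh
  (fun y Iy => is_deriveB (dux _ _ (Qth y Iy)) (dux _ _ (Qt y Iy))).
have Iy' : x <= y' <= x + h by rewrite (ltW xy') (ltW y'xh).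
have [s' /andP[ts' s'th] E4] := @MVT_cc _ (ux^~ y') (uxt^~ y') _ _ th
  (fun s Is => duxt _ _ (conj Is Iy')).
exists s, y, s', y'; split; [split | split |] => //.
- by rewrite (ltW xy) (ltW yxh).
- by rewrite (ltW ts') (ltW s'th).
have hh a : a + h - a = h by rewrite addrAC subrr add0r.
rewrite !hh in E1 E2 E3 E4.
apply: (mulIf (lt0r_neq0 h0)); apply: (mulIf (lt0r_neq0 h0)).
by rewrite -E2 -E4 -E1 -E3; ring.
Qed.

Lemma cont_Q_mixed_partials (L t x : R) : cont_Q L utx -> cont_Q L uxt ->
  (forall s y : R, 0 < s -> 0 < y < L -> is_derive s 1 (u^~ y) (ut s y)) ->
  (forall s y : R, 0 < s -> 0 < y < L -> is_derive y 1 (u s) (ux s y)) ->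
  (forall s y : R, 0 < s -> 0 < y < L -> is_derive y 1 (ut s) (utx s y)) ->
  (forall s y : R, 0 < s -> 0 < y < L -> is_derive s 1 (ux^~ y) (uxt s y)) ->
  0 < t -> 0 < x < L -> utx t x = uxt t x.
Proof.
move=> cutx cuxt dut dux dutx duxt t0 /andP[x0 xL].
apply/eqP; rewrite -subr_eq0 -normr_le0; apply/ler_addgt0Pr => e e0; rewrite add0r.
have Qtx : Qcl L (t, x) by apply: Qcl_oo; [exact: ltW | apply/andP].
have e20 : 0 < e / 2 by rewrite divr_gt0.
have [d1 d10 utxd] := cont_Q_dist_lt cutx Qtx e20.
have [d2 d20 uxtd] := cont_Q_dist_lt cuxt Qtx e20.
pose m := Num.min (Num.min d1 d2) (L - x).
have [md1 md2 mL m0] : [/\ m <= d1, m <= d2, m <= L - x & 0 < m].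
  by rewrite !ge_min !lexx ?orbT !lt_min d10 d20 subr_gt0 xL.
have h0 : 0 < m / 2 by rewrite divr_gt0.
have inQ s y : t <= s <= t + m / 2 /\ x <= y <= x + m / 2 -> 0 < s /\ 0 < y < L.
  by move=> [/andP[ts _] /andP[xy yxh]]; split; [lra | apply/andP; split; lra].
have [||||s [y [s' [y' [[/andP[ts sth] /andP[xy yxh]] [/andP[ts' s'th] /andP[xy' y'xh]] E]]]]]
    := @mixed_partials_square t x _ h0.
- by move=> s y /inQ[s0 yL]; exact: dut.
- by move=> s y /inQ[s0 yL]; exact: dux.
- by move=> s y /inQ[s0 yL]; exact: dutx.
- by move=> s y /inQ[s0 yL]; exact: duxt.
have Qsy : Qcl L (s, y) by apply: Qcl_oo; [lra | apply/andP; split; lra].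
have Qsy' : Qcl L (s', y') by apply: Qcl_oo; [lra | apply/andP; split; lra].
have B1 : `|utx t x - utx s y| < e / 2.
  by rewrite distrC; apply: utxd => //; rewrite ger0_norm; lra.
have B2 : `|uxt s' y' - uxt t x| < e / 2.
  by apply: uxtd => //; rewrite ger0_norm; lra.
have -> : utx t x - uxt t x = (utx t x - utx s y) + (uxt s' y' - uxt t x) by rewrite E; ring.
by apply: le_trans (ler_normD _ _) _; lra.
Qed.

Lemma cont_Q_is_derive_slice0 (L x : R) : cont_Q L u -> cont_Q L ux ->
  (forall s y : R, 0 < s -> 0 < y < L -> is_derive y 1 (u s) (ux s y)) ->
  0 < x < L -> is_derive x 1 (u 0) (ux 0 x).
Proof.
move=> cu cux dux xL; have /andP[x0 xLt] := xL.
apply: is_derive_increment => e e0.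
have [d d0 uxd] := cont_Q_dist_lt cux (Qcl_oo (lexx 0) xL) e0.
pose r := Num.min d (Num.min x (L - x)).
have [rd rx rL r0] : [/\ r <= d, r <= x, r <= L - x & 0 < r].
  by rewrite !ge_min !lexx ?orbT !lt_min d0 x0 subr_gt0 xLt.
exists r => // h h0 hr.
have near_x z : `|z - x| <= `|h| -> 0 < z < L.
  move=> zx; have : `|z - x| < r by exact: le_lt_trans hr.
  by rewrite ltr_norml => /andP[z1 z2]; apply/andP; split; lra.
have hxL : 0 < h + x < L by apply: near_x; rewrite addrK.
have incr s : 0 < s < d -> `|u s (h + x) - u s x - h * ux 0 x| <= e * `|h|.
  case/andP => s0 sd.
  have [c cx ->] := @MVT_between _ (u s) (ux s) x (h + x)
    (fun z zx => dux s z s0 (near_x z ltac:(by rewrite addrK in zx))).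
  rewrite addrK in cx *.
  rewrite [h * _]mulrC -mulrBl normrM ler_pM2r ?normr_gt0 //; apply: ltW.
  apply: uxd; first exact: Qcl_oo (ltW s0) (near_x c cx).
  - by rewrite subr0 gtr0_norm.
  - exact: le_lt_trans cx (lt_le_trans hr rd).
exact: cont_Q_increment_le0 cu hxL xL d0 incr.
Qed.

End mixed_partials.

Section wave_energy.
Variables (R : realType) (L : R) (P : R -> R).
Variables (u ut ux utt uxx utx uxt : R -> R -> R).
Implicit Types t x : R.
Hypothesis L0 : 0 < L.
Hypothesis dP : forall y, derivable P y 1.
Hypothesis cdP : continuous (derive1 P).
Hypothesis P_ge0 : forall y, 0 <= P y.
Hypotheses (cu : cont_Q L u) (cut : cont_Q L ut) (cux : cont_Q L ux).
Hypotheses (cutt : cont_Q L utt) (cuxx : cont_Q L uxx).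
Hypotheses (cutx : cont_Q L utx) (cuxt : cont_Q L uxt).
Hypothesis dut : forall t x, 0 < t -> 0 < x < L -> is_derive t 1 (u^~ x) (ut t x).
Hypothesis dux : forall t x, 0 < t -> 0 < x < L -> is_derive x 1 (u t) (ux t x).
Hypothesis dutt : forall t x, 0 < t -> 0 < x < L -> is_derive t 1 (ut^~ x) (utt t x).
Hypothesis duxx : forall t x, 0 < t -> 0 < x < L -> is_derive x 1 (ux t) (uxx t x).
Hypothesis dutx : forall t x, 0 < t -> 0 < x < L -> is_derive x 1 (ut t) (utx t x).
Hypothesis duxt : forall t x, 0 < t -> 0 < x < L -> is_derive t 1 (ux^~ x) (uxt t x).
Hypothesis wave : forall t x, 0 < t -> 0 < x < L ->
  utt t x = uxx t x - derive1 P (u t x).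
Hypothesis neumann : forall t, 0 < t -> ux t 0 = 0 /\ ux t L = 0.

Definition energy_density t x := ut t x ^+ 2 + ux t x ^+ 2 + 2 * P (u t x).

Definition denergy_density t x :=
  2 * (ut t x * utt t x + ux t x * uxt t x + derive1 P (u t x) * ut t x).

Definition energy := xint L energy_density.

Lemma cont_Q_energy_density : cont_Q L energy_density.
Proof.
apply: cont_QD; first by apply: cont_QD; exact: cont_QM.
apply: (@cont_QM _ _ (fun _ _ => 2)); first exact: cont_Q_cst.
exact: cont_Q_comp (derivable_continuous dP) cu.
Qed.

Lemma cont_Q_denergy_density : cont_Q L denergy_density.
Proof.
apply: (@cont_QM _ _ (fun _ _ => 2)); first exact: cont_Q_cst.
apply: cont_QD; first by apply: cont_QD; exact: cont_QM.
by apply: cont_QM => //; exact: cont_Q_comp cdP cu.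
Qed.

Lemma energy_density_is_derive t x : 0 < t -> 0 < x < L ->
  is_derive t 1 (energy_density^~ x) (denergy_density t x).
Proof.
move=> t0 xL.
have dPu : is_derive t 1 (P \o u^~ x) (derive1 P (u t x) * ut t x).
  by apply: is_derive1_comp (dut t0 xL); rewrite derive1E; exact: derivableP.
have := is_deriveD (is_deriveD (is_deriveM (dutt t0 xL) (dutt t0 xL))
  (is_deriveM (duxt t0 xL) (duxt t0 xL))) (is_deriveZ 2 dPu).
have scaleE (a b : R) : a *: b = a * b by [].
rewrite !scaleE (_ : _ + _ = denergy_density t x) //.
by rewrite /denergy_density; ring.
Qed.

Lemma utx_uxt t x : 0 < t -> 0 < x < L -> utx t x = uxt t x.
Proof. exact: cont_Q_mixed_partials cutx cuxt dut dux dutx duxt. Qed.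

(* The wave equation and the symmetry of the second derivatives turn the energy
   flux into the exact derivative 2 (ut ux)_x, whose boundary terms vanish. *)
Lemma xint_denergy_density t : 0 < t -> xint L denergy_density t = 0.
Proof.
move=> t0.
have flux y : I0L L y -> denergy_density t y = 2 * (ut t y * uxx t y + ux t y * utx t y).
  rewrite I0LE => yL; rewrite /denergy_density wave // utx_uxt //; ring.
have cflux : cont_Q L (fun s y => ut s y * uxx s y + ux s y * utx s y).
  by apply: cont_QD; exact: cont_QM.
rewrite /xint (_ : \int[_]_(y in _) _ = \int[lebesgue_measure]_(y in I0L L)
    (2 * (ut t y * uxx t y + ux t y * utx t y))); last first.
  by apply: eq_Rintegral => y; rewrite inE => /flux.
rewrite RintegralZl; [|exact: measurable_itv | exact: cont_Q_integrable cflux (ltW t0)].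
have -> : \int[lebesgue_measure]_(y in I0L L) (ut t y * uxx t y + ux t y * utx t y)
    = ut t L * ux t L - ut t 0 * ux t 0.
  apply: (@Rintegral_oo_derive _ (fun y => ut t y * ux t y)) => //.
  - exact: cont_Q_slice (cont_QM cut cux) (ltW t0).
  - exact: cont_Q_slice cflux (ltW t0).
  - by move=> y yL; have := is_deriveM (dutx t0 yL) (duxx t0 yL).
by have [-> ->] := neumann t0; rewrite !mulr0 subrr mulr0.
Qed.

Lemma energy_conserved t : 0 <= t -> energy t = energy 0.
Proof.
rewrite le_eqVlt => /predU1P[<- // | t0].
have [|c /[!in_itv]/andP[c0 _]] := @MVT _ energy (xint L denergy_density) _ _ t0 _
  (xint_continuous (ltW t0) cont_Q_energy_density).
  move=> s /[!in_itv]/andP[s0 _].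
  exact: xint_is_derive cont_Q_energy_density cont_Q_denergy_density
    energy_density_is_derive s0.
by move/eqP; rewrite xint_denergy_density // mul0r subr_eq0 => /eqP.
Qed.

Lemma energy_ge0 t : 0 <= energy t.
Proof.
apply: Rintegral_ge0 => x _.
by rewrite /energy_density !addr_ge0 ?sqr_ge0 ?mulr_ge0.
Qed.

Lemma normr_ut_le t x : `|ut t x| <= 1 + energy_density t x.
Proof.
apply: le_trans (normr_le1Dsqr _) _; rewrite /energy_density lerD2l.
have := P_ge0 (u t x); have := sqr_ge0 (ux t x); lra.
Qed.

Lemma normr_ux_le t x : `|ux t x| <= 1 + energy_density t x.
Proof.
apply: le_trans (normr_le1Dsqr _) _; rewrite /energy_density lerD2l.
have := P_ge0 (u t x); have := sqr_ge0 (ut t x); lra.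
Qed.

Lemma Rintegral_normr_le_energy G t a b : cont_Q L G -> 0 <= t -> 0 <= a -> b <= L ->
  (forall x, `|G t x| <= 1 + energy_density t x) ->
  \int[lebesgue_measure]_(x in `]a, b[) `|G t x| <= L + energy 0.
Proof.
move=> cG t0 a0 bL Ge.
have c1e : cont_Q L (fun s x => 1 + energy_density s x).
  exact: cont_QD (@cont_Q_cst _ L 1) cont_Q_energy_density.
have c1e_t := cont_Q_slice c1e t0.
apply: (@le_trans _ _ (\int[lebesgue_measure]_(x in `]a, b[) (1 + energy_density t x))).
  apply: le_Rintegral; [exact: measurable_itv | | exact: continuous_integrable_itv_oo a0 bL c1e_t |
    by move=> x _; exact: Ge].
  apply: continuous_integrable_itv_oo a0 bL _.
  exact: cont_Q_slice (cont_Q_comp norm_continuous cG) t0.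
apply: (@le_trans _ _ (\int[lebesgue_measure]_(x in I0L L) (1 + energy_density t x))).
  apply: le_Rintegral_subset; [exact: measurable_itv | exact: measurable_itv | | | ].
  - by move=> z; rewrite I0LE /= in_itv /= => /andP[az zb]; apply/andP; split; lra.
  - exact: cont_Q_integrable c1e t0.
  - by move=> x _; apply: le_trans (normr_ge0 _) (Ge x).
rewrite RintegralD; [| exact: measurable_itv | exact: cont_Q_integrable (@cont_Q_cst _ L 1) t0 |
  exact: cont_Q_integrable cont_Q_energy_density t0].
by rewrite Rintegral_itv_oo_cst ?(ltW L0) // mul1r subr0 -(energy_conserved t0).
Qed.

Lemma xint_u_le t : 0 <= t -> `|xint L u t| <= `|xint L u 0| + t * (L + energy 0).
Proof.
rewrite le_eqVlt => /predU1P[<- | t0]; first by rewrite mul0r addr0.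
have [|c /[!in_itv]/andP[/= c0 _] E] := @MVT _ (xint L u) (xint L ut) _ _ t0 _
  (xint_continuous (ltW t0) cu).
  by move=> s /[!in_itv]/andP[s0 _]; exact: xint_is_derive cu cut dut s0.
rewrite subr0 in E; rewrite -[xint L u t](subrK (xint L u 0)) E.
rewrite addrC; apply: le_trans (ler_normD _ _) _.
rewrite lerD2l normrM (gtr0_norm t0) mulrC ler_pM2l //.
apply: le_trans (le_normr_Rintegral _ _) _.
- exact: measurable_itv.
- exact: cont_Q_integrable cut (ltW c0).
- exact: Rintegral_normr_le_energy cut (ltW c0) (lexx 0) (lexx L) (normr_ut_le c).
Qed.

Lemma u_dist_le t x y : 0 < t -> 0 <= x <= L -> 0 <= y <= L ->
  `|u t x - u t y| <= L + energy 0.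
Proof.
wlog xy : x y / x <= y.
  move=> H t0 xL yL; have [/H|/ltW/H] := leP x y; first exact.
  by rewrite distrC; exact.
move=> t0 /andP[x0 xL] /andP[y0 yL].
have [<-|xny] := eqVneq x y.
  by rewrite subrr normr0 addr_ge0 ?(ltW L0) ?energy_ge0.
have {xny}{}xy : x < y by rewrite lt_neqAle xny xy.
have sub : `[x, y] `<=` `[0, L].
  by move=> z /=; rewrite !in_itv /= => /andP[xz zy]; apply/andP; split; lra.
have ftc : \int[lebesgue_measure]_(z in `]x, y[) ux t z = u t y - u t x.
  apply: (@Rintegral_oo_derive _ (u t)) => //.
  - exact: continuous_subspaceW sub (cont_Q_slice cu (ltW t0)).
  - exact: continuous_subspaceW sub (cont_Q_slice cux (ltW t0)).
  - by move=> z /andP[xz zy]; apply: dux => //; apply/andP; split; lra.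
rewrite -opprB -ftc normrN.
apply: le_trans (le_normr_Rintegral _ _) _; first exact: measurable_itv.
  exact: continuous_integrable_itv_oo x0 yL (cont_Q_slice cux (ltW t0)).
exact: Rintegral_normr_le_energy cux (ltW t0) x0 yL (normr_ux_le t).
Qed.

Lemma u_le t x : 0 < t -> 0 < x < L ->
  `|u t x| * L <= `|xint L u 0| + (t + L) * (L + energy 0).
Proof.
move=> t0 /andP[x0 xL].
have mI : measurable (I0L L) by exact: measurable_itv.
have cdist : cont_Q L (fun s y => u t x - u s y) by exact: cont_QB (@cont_Q_cst _ L _) cu.
have -> : `|u t x| * L =
    `|xint L u t + \int[lebesgue_measure]_(y in I0L L) (u t x - u t y)|.
  rewrite RintegralB //; last exact: cont_Q_integrable cu (ltW t0).
    rewrite Rintegral_itv_oo_cst ?(ltW L0) // subr0 /xint addrC subrK.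
    by rewrite normrM (gtr0_norm L0).
  exact: cont_Q_integrable (@cont_Q_cst _ L _) (ltW t0).
apply: le_trans (ler_normD _ _) _; rewrite mulrDl addrA.
apply: lerD; first exact: xint_u_le (ltW t0).
apply: le_trans (le_normr_Rintegral _ _) _; [exact: mI | exact: cont_Q_integrable cdist (ltW t0) |].
apply: (@le_trans _ _ (\int[lebesgue_measure]_(y in I0L L) (L + energy 0))).
  apply: le_Rintegral; [exact: mI | | exact: cont_Q_integrable (@cont_Q_cst _ L _) (ltW t0) |].
    exact: cont_Q_integrable (cont_Q_comp norm_continuous cdist) (ltW t0).
  move=> y; rewrite I0LE => /andP[y0 yL].
  by apply: u_dist_le => //; apply/andP; split; exact: ltW.
by rewrite Rintegral_itv_oo_cst ?(ltW L0) // subr0 mulrC.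
Qed.

Variables (C : R) (u0 u1 : R -> R).
Hypothesis P_le : forall y, P y <= C.
Hypothesis u0_H1 : H1norm_le L u0 C.
Hypothesis u1_L2 : L2norm_le L u1 C.
Hypothesis init : forall x, 0 <= x <= L -> u 0 x = u0 x /\ ut 0 x = u1 x.

Lemma derive1_u0 x : 0 < x < L -> derive1 u0 x = ux 0 x.
Proof.
move=> xL; have /andP[x0 xLt] := xL.
have near_u0 : \forall y \near x, u 0 y = u0 y.
  apply/nbhs_ballP; exists (Num.min x (L - x)) => /=; first by rewrite lt_min x0 subr_gt0.
  move=> y; rewrite /ball /= lt_min !ltr_distlC => /andP[/andP[y1 _] /andP[_ y2]].
  by apply: (init _).1; apply/andP; split; lra.
have := near_eq_is_derive near_u0 (cont_Q_is_derive_slice0 cu cux dux xL).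
by move=> ?; rewrite derive1E derive_val.
Qed.

Let in_cc x : 0 < x < L -> 0 <= x <= L.
Proof. by case/andP => x0 xL; apply/andP; split; exact: ltW. Qed.

Lemma Rintegral_sqr_ut0_le : \int[lebesgue_measure]_(x in I0L L) ut 0 x ^+ 2 <= C ^+ 2.
Proof.
move: u1_L2; rewrite /L2norm_le (@sqint_Rintegral _ _ _ (ut 0)) ?lee_fin //.
- exact: cont_Q_slice cut (lexx 0).
- by move=> x /in_cc /init[_ ->].
Qed.

Lemma Rintegral_sqr_u0_ux0_le : \int[lebesgue_measure]_(x in I0L L) u 0 x ^+ 2 +
  \int[lebesgue_measure]_(x in I0L L) ux 0 x ^+ 2 <= C ^+ 2.
Proof.
move: u0_H1; rewrite /H1norm_le (@sqint_Rintegral _ _ _ (u 0))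
  ?(@sqint_Rintegral _ _ (derive1 u0) (ux 0)) -?EFinD ?lee_fin //.
- exact: cont_Q_slice cux (lexx 0).
- by move=> x /derive1_u0.
- exact: cont_Q_slice cu (lexx 0).
- by move=> x /in_cc /init[<-].
Qed.

Lemma energy0_le : energy 0 <= 2 * C ^+ 2 + 2 * C * L.
Proof.
have mI : measurable (I0L L) by exact: measurable_itv.
have i0 F : cont_Q L F -> lebesgue_measure.-integrable (I0L L) (EFin \o F 0).
  by move=> cF; exact: cont_Q_integrable cF (lexx 0).
have cPu : cont_Q L (fun s x => 2 * P (u s x)).
  exact: cont_QM (@cont_Q_cst _ L 2) (cont_Q_comp (derivable_continuous dP) cu).
have P_int : \int[lebesgue_measure]_(x in I0L L) (2 * P (u 0 x)) <= 2 * C * L.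
  apply: (@le_trans _ _ (\int[lebesgue_measure]_(x in I0L L) (2 * C))).
    apply: le_Rintegral; [exact: mI | exact: i0 cPu | exact: i0 (@cont_Q_cst _ L _) |].
    by move=> x _; rewrite ler_pM2l.
  by rewrite Rintegral_itv_oo_cst ?(ltW L0) // subr0.
rewrite /energy /xint /energy_density RintegralD //; last 2 first.
- exact: i0 (cont_QD (cont_QM cut cut) (cont_QM cux cux)).
- exact: i0 cPu.
rewrite RintegralD //; [| exact: i0 (cont_QM cut cut) | exact: i0 (cont_QM cux cux)].
apply: lerD P_int; have -> : 2 * C ^+ 2 = C ^+ 2 + C ^+ 2 by ring.
apply: lerD Rintegral_sqr_ut0_le (le_trans _ Rintegral_sqr_u0_ux0_le).
by rewrite lerDr; apply: Rintegral_ge0 => x _; exact: sqr_ge0.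
Qed.

Lemma xint_u0_le : `|xint L u 0| <= L + C ^+ 2.
Proof.
have mI : measurable (I0L L) by exact: measurable_itv.
have i0 F : cont_Q L F -> lebesgue_measure.-integrable (I0L L) (EFin \o F 0).
  by move=> cF; exact: cont_Q_integrable cF (lexx 0).
apply: le_trans (le_normr_Rintegral _ _) _; [exact: mI | exact: i0 cu |].
apply: (@le_trans _ _ (\int[lebesgue_measure]_(x in I0L L) (1 + u 0 x ^+ 2))).
  apply: le_Rintegral; [exact: mI | exact: i0 (cont_Q_comp norm_continuous cu) | |].
    exact: i0 (cont_QD (@cont_Q_cst _ L 1) (cont_QM cu cu)).
  by move=> x _; exact: normr_le1Dsqr.
rewrite RintegralD; [| exact: mI | exact: i0 (@cont_Q_cst _ L 1) | exact: i0 (cont_QM cu cu)].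
rewrite Rintegral_itv_oo_cst ?(ltW L0) // mul1r subr0 lerD2l.
apply: le_trans Rintegral_sqr_u0_ux0_le; rewrite lerDl.
by apply: Rintegral_ge0 => x _; exact: sqr_ge0.
Qed.

Lemma u_le_data t x : 0 < t -> 0 < x < L ->
  `|u t x| * L <= L + C ^+ 2 + (t + L) * (L + (2 * C ^+ 2 + 2 * C * L)).
Proof.
move=> t0 xL; apply: le_trans (u_le t0 xL) _.
apply: lerD xint_u0_le _; rewrite ler_wpM2l ?lerD2l ?energy0_le //.
by rewrite addr_ge0 ?(ltW t0) ?(ltW L0).
Qed.

End wave_energy.

Lemma classical_solution_bounded (R : realType) (L C : R) (P u0 u1 : R -> R)
    (u : R -> R -> R) :
  0 < L -> smooth P -> (forall y, 0 <= P y <= C) ->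
  H1norm_le L u0 C -> L2norm_le L u1 C ->
  classical_solution L (derive1 P) u0 u1 u ->
  forall t x, 0 < t -> 0 < x < L ->
  `|u t x| * L <= L + C ^+ 2 + (t + L) * (L + (2 * C ^+ 2 + 2 * C * L)).
Proof.
move=> L0 Psm PC u0C u1C [ut [ux [utt [uxx [utx [uxt
  [[cu [cut [cux [cutt [cuxx [cutx cuxt]]]]]] [du [neumann init]]]]]]]]] t x t0 xL.
have dP y : derivable P y 1 := Psm 0%N y.
have cdP : continuous (derive1 P) := derivable_continuous (Psm 1%N).
have P_ge0 y : 0 <= P y by case/andP: (PC y).
have P_le y : P y <= C by case/andP: (PC y).
apply: (u_le_data L0 dP cdP P_ge0 cu cut cux cutt cuxx cutx cuxt _ _ _ _ _ _ _
  neumann P_le u0C u1C init t0 xL);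
  by move=> s y s0 yL; have [? [? [? [? [? [? ?]]]]]] := du s y s0 yL.
Qed.

Unset Implicit Arguments.
Set Strict Implicit.

Theorem lemma3p5 (R : realType) (L : R) (Phi : R -> R) (u0 u1 : R -> R)
  (u0s u1s Phis : nat -> R -> R) (C : R) (us : nat -> R -> R -> R) :
  0 < L ->
  (* hypotheses on Phi *)
  continuous Phi ->
  (forall x, x != 1 -> x != -1 -> derivable Phi x 1 /\ {for x, continuous (derive1 Phi)}) ->
  (exists c, forall x, x <= -1 -> Phi x = c) ->
  (exists c, forall x, 1 <= x -> Phi x = c) ->
  (forall x y t, -1 <= x <= 1 -> -1 <= y <= 1 -> 0 <= t <= 1 ->
     Phi (t * x + (1 - t) * y) <= t * Phi x + (1 - t) * Phi y) ->
  (forall x y, -1 <= x -> x <= y -> y <= 0 -> Phi y <= Phi x) ->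
  (forall x y, 0 <= x -> x <= y -> y <= 1 -> Phi x <= Phi y) ->
  (* data *)
  H1 L u0 -> L2 L u1 ->
  (forall n, exists D, cinf_cc 0 L (u0s n) D /\ D 1%N 0 = 0 /\ D 1%N L = 0) ->
  (forall n, exists D, cinf_cc 0 L (u1s n) D) ->
  (forall n, u1s n 0 = 0 /\ u1s n L = 0) ->
  (forall n, smooth (Phis n)) ->
  (* convergences *)
  H1conv L u0s u0 ->
  L2conv L u1s u1 ->
  (forall e : R, 0 < e -> exists N : nat, forall n x, (N <= n)%N ->
     `|Phis n x - Phi x| < e) ->
  (forall x, x != 1 -> x != -1 ->
     (fun n => (derive1 (Phis n)) x) @ \oo --> (derive1 Phi) x) ->
  (forall eps : R, 0 < eps -> forall e : R, 0 < e ->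
     exists N : nat, forall n x, (N <= n)%N -> eps <= `|x - 1| -> eps <= `|x + 1| ->
     `|(derive1 (Phis n)) x - (derive1 Phi) x| < e) ->
  (forall eps : R, 0 < eps -> forall n x, 1 + eps <= `|x| -> (derive1 (Phis n)) x = 0) ->
  (* uniform bounds *)
  0 < C ->
  (forall n, H1norm_le L (u0s n) C) ->
  (forall n, L2norm_le L (u1s n) C) ->
  (forall n x, 0 <= Phis n x <= C) ->
  (forall n x, `|(derive1 (Phis n)) x| <= C) ->
  (* u_n classical solutions *)
  (forall n, classical_solution L ((derive1 (Phis n))) (u0s n) (u1s n) (us n)) ->
  (* conclusion: {u_n} bounded in L^oo((0,T) x (0,L)) for every T > 0 *)
  forall T : R, 0 < T ->
    exists M : R, forall n t x, 0 < t < T -> 0 < x < L -> `|us n t x| <= M.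
Proof.
move=> L0 _ _ _ _ _ _ _ _ _ _ _ _ Psm _ _ _ _ _ _ C0 u0C u1C PC _ sol T T0.
pose K := L + (2 * C ^+ 2 + 2 * C * L).
have K0 : 0 <= K by rewrite /K !addr_ge0 ?mulr_ge0 ?sqr_ge0 ?(ltW L0) ?(ltW C0).
exists ((L + C ^+ 2 + (T + L) * K) / L) => n t x /andP[t0 tT] xL.
rewrite ler_pdivlMr //; apply: le_trans (classical_solution_bounded L0 (Psm n) (PC n)
  (u0C n) (u1C n) (sol n) t0 xL) _.
by rewrite lerD2l ler_wpM2r // lerD2r (ltW tT).
Qed.
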